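(* $\mathcal{G}\subseteq\mathcal{F}$; that is, every function in $\mathcal{G}$ is strictly definable in the simply typed $\lambda$-calculus with $\beta\eta$-conversion.
   Context: We work in the simply typed $\lambda$-calculus (type assignment to untyped $\lambda$-terms) with a single base type $o$. For a type $\tau$, $\omega_\tau=(\tau\to\tau)\to\tau\to\tau$. The Church numeral of $n$ is $\rho(n)=\lambda f x.f^{n}x$. A function $f:\mathbb{N}^k\to\mathbb{N}$ is strictly definable if there exist a type $\tau$ and a term $E$ with $\vdash E:\omega_\tau\to\cdots\to\omega_\tau\to\omega_\tau$ ($k$ arguments) such that $E\,\rho(n_1)\cdots\rho(n_k)=_{\beta\eta}\rho(f(n_1,\dots,n_k))$ for all $n_1,\dots,n_k\in\mathbb{N}$. $\mathcal{F}$ denotes the class of all strictly definable functions. Extended polynomials: the smallest class of functions over $\mathbb{N}$ containing the constants $0$ and $1$, projections, addition, multiplication and $\mathrm{ifzero}(n,m,p)=(\text{if } n=0 \text{ then } m \text{ else } p)$, closed under composition. $\mathcal{G}$ is the smallest class of functions over $\mathbb{N}$ that is closed under composition and contains: all extended polynomials; for every $l\geq 2$ the function $f_1^{l}(m,n_1,\dots,n_l)=n_i$ where $i=(m\bmod l)+1$; and for every $l\geq 1$ the function $f_2^{l}(m,n_1,n_2)=(\text{if } m\leq l \text{ then } n_1 \text{ else } n_2)$. *)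

From Stdlib Require Import Relation_Operators.
From mathcomp Require Import all_boot.

Set Implicit Arguments.
Unset Strict Implicit.
Unset Printing Implicit Defensive.

Inductive ty : Type := TO | Arr of ty & ty.

Definition omega (t : ty) : ty := Arr (Arr t t) (Arr t t).

Definition arrows (k : nat) (A B : ty) : ty := iter k (Arr A) B.

Inductive tm : Type := Var of nat | App of tm & tm | Lam of tm.

Fixpoint lift (c : nat) (t : tm) : tm :=
  match t with
  | Var n => if c <= n then Var n.+1 else Var n
  | App a b => App (lift c a) (lift c b)
  | Lam a => Lam (lift c.+1 a)
  end.

Fixpoint subst (j : nat) (s : tm) (t : tm) : tm :=
  match t with
  | Var n => if n == j then s else if j < n then Var n.-1 else Var n
  | App a b => App (subst j s a) (subst j s b)
  | Lam a => Lam (subst j.+1 (lift 0 s) a)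
  end.

Inductive step : tm -> tm -> Prop :=
  | step_beta t s : step (App (Lam t) s) (subst 0 s t)
  | step_eta t : step (Lam (App (lift 0 t) (Var 0))) t
  | step_appl a a' b : step a a' -> step (App a b) (App a' b)
  | step_appr a b b' : step b b' -> step (App a b) (App a b')
  | step_lam a a' : step a a' -> step (Lam a) (Lam a').

Definition beta_eta_eq : tm -> tm -> Prop := clos_refl_sym_trans tm step.

Fixpoint lookup (G : seq ty) (n : nat) : option ty :=
  match G, n with
  | [::], _ => None
  | A :: _, 0 => Some A
  | _ :: G', m.+1 => lookup G' m
  end.

Inductive typed : seq ty -> tm -> ty -> Prop :=
  | typed_var G n A : lookup G n = Some A -> typed G (Var n) A
  | typed_app G a b A B : typed G a (Arr A B) -> typed G b A -> typed G (App a b) B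
  | typed_lam G a A B : typed (A :: G) a B -> typed G (Lam a) (Arr A B).

Definition church (n : nat) : tm := Lam (Lam (iter n (App (Var 1)) (Var 0))).

Definition apps (E : tm) (ts : seq tm) : tm := foldl App E ts.

Definition strictly_definable (k : nat) (f : ('I_k -> nat) -> nat) : Prop :=
  exists (tau : ty) (E : tm),
    typed [::] E (arrows k (omega tau) (omega tau)) /\
    forall x : 'I_k -> nat,
      beta_eta_eq (apps E [seq church (x i) | i <- enum 'I_k]) (church (f x)).

Definition compose (m k : nat) (h : ('I_m -> nat) -> nat)
  (gs : 'I_m -> ('I_k -> nat) -> nat) : ('I_k -> nat) -> nat :=
  fun x => h (fun i => gs i x).

Inductive ext_poly : forall k : nat, (('I_k -> nat) -> nat) -> Prop :=
  | ep_zero k : ext_poly (fun _ : 'I_k -> nat => 0)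
  | ep_one k : ext_poly (fun _ : 'I_k -> nat => 1)
  | ep_proj k (i : 'I_k) : ext_poly (fun x : 'I_k -> nat => x i)
  | ep_add : ext_poly (fun x : 'I_2 -> nat => x (inord 0) + x (inord 1))
  | ep_mul : ext_poly (fun x : 'I_2 -> nat => x (inord 0) * x (inord 1))
  | ep_ifzero : ext_poly (fun x : 'I_3 -> nat =>
                   if x (inord 0) == 0 then x (inord 1) else x (inord 2))
  | ep_comp m k (h : ('I_m -> nat) -> nat) (gs : 'I_m -> ('I_k -> nat) -> nat) :
      ext_poly h -> (forall i, ext_poly (gs i)) -> ext_poly (compose h gs).

(* f_1^l (m, n_1, ..., n_l) = n_i with i = (m mod l) + 1; argument 0 is m *)
Definition f1 (l : nat) : ('I_l.+1 -> nat) -> nat :=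
  fun x => x (inord ((x (inord 0)) %% l).+1).

Arguments f1 l x : clear implicits.

Definition f2 (l : nat) : ('I_3 -> nat) -> nat :=
  fun x => if x (inord 0) <= l then x (inord 1) else x (inord 2).

Arguments f2 l x : clear implicits.

Inductive inG : forall k : nat, (('I_k -> nat) -> nat) -> Prop :=
  | G_ext_poly k (f : ('I_k -> nat) -> nat) : ext_poly f -> inG f
  | G_f1 l : 2 <= l -> inG (f1 l)
  | G_f2 l : 1 <= l -> inG (f2 l)
  | G_comp m k (h : ('I_m -> nat) -> nat) (gs : 'I_m -> ('I_k -> nat) -> nat) :
      inG h -> (forall i, inG (gs i)) -> inG (compose h gs).

(* Extended polynomials are definable with numerals of any type, and definability with
   numerals of a fixed type is closed under composition.  The selectors f_1^l and f_2^l are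
   definable with numerals of type o^L -> o: there a term [next] maps the projection
   fun z_1 .. z_L => z_(i+1) to the projection of index h(i), so the numeral m applied to
   [next] and the first projection yields the projection of index h^m(0), where h is the
   step function of a finite automaton (i+1 mod L for f_1^l, min(i+1, L-1) for f_2^l);
   applied to the eta-expanded argument numerals, this projection selects the output.
   Each building block works for every multiple L of some N > 0, so any function of G,
   being built from finitely many blocks, is definable at one common type. *)

From Stdlib Require Import Relation_Operators.
From Stdlib Require List.
From mathcomp Require Import all_boot zify.

Set Implicit Arguments.
Unset Strict Implicit.
Unset Printing Implicit Defensive.

(** * Renaming and parallel substitution *)

Definition upren (xi : nat -> nat) (i : nat) : nat :=
  if i is j.+1 then (xi j).+1 else 0.

Fixpoint ren (xi : nat -> nat) (t : tm) : tm :=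
  match t with
  | Var n => Var (xi n)
  | App a b => App (ren xi a) (ren xi b)
  | Lam a => Lam (ren (upren xi) a)
  end.

Definition up (s : nat -> tm) (i : nat) : tm :=
  if i is j.+1 then ren succn (s j) else Var 0.

Fixpoint inst (s : nat -> tm) (t : tm) : tm :=
  match t with
  | Var n => s n
  | App a b => App (inst s a) (inst s b)
  | Lam a => Lam (inst (up s) a)
  end.

Definition scons (u : tm) (s : nat -> tm) (i : nat) : tm :=
  if i is j.+1 then s j else u.

Lemma ren_ext xi zeta t : xi =1 zeta -> ren xi t = ren zeta t.
Proof.
elim: t xi zeta => [n|a IHa b IHb|a IHa] xi zeta E /=; first by rewrite E.
  by rewrite (IHa _ _ E) (IHb _ _ E).
by rewrite (IHa _ (upren zeta)) // => -[|i] //=; rewrite E.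
Qed.

Lemma inst_ext s s' t : s =1 s' -> inst s t = inst s' t.
Proof.
elim: t s s' => [n|a IHa b IHb|a IHa] s s' E /=; first by rewrite E.
  by rewrite (IHa _ _ E) (IHb _ _ E).
by rewrite (IHa _ (up s')) // => -[|i] //=; rewrite E.
Qed.

Lemma renE xi t : ren xi t = inst (Var \o xi) t.
Proof.
elim: t xi => [n|a IHa b IHb|a IHa] xi //=; first by rewrite IHa IHb.
by rewrite IHa; congr Lam; apply: inst_ext => -[|i].
Qed.

Lemma inst_id s t : s =1 Var -> inst s t = t.
Proof.
elim: t s => [n|a IHa b IHb|a IHa] s E /=; first by rewrite E.
  by rewrite IHa // IHb.
by rewrite IHa // => -[|i] //=; rewrite E.
Qed.

Lemma ren_id xi t : xi =1 id -> ren xi t = t.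
Proof. by move=> E; rewrite renE; apply: inst_id => i /=; rewrite E. Qed.

Lemma ren_ren xi zeta t : ren xi (ren zeta t) = ren (xi \o zeta) t.
Proof.
elim: t xi zeta => [n|a IHa b IHb|a IHa] xi zeta //=; first by rewrite IHa IHb.
by rewrite IHa; congr Lam; apply: ren_ext => -[|i].
Qed.

Lemma inst_ren s xi t : inst s (ren xi t) = inst (s \o xi) t.
Proof.
elim: t s xi => [n|a IHa b IHb|a IHa] s xi //=; first by rewrite IHa IHb.
by rewrite IHa; congr Lam; apply: inst_ext => -[|i].
Qed.

Lemma ren_inst xi s t : ren xi (inst s t) = inst (ren xi \o s) t.
Proof.
elim: t xi s => [n|a IHa b IHb|a IHa] xi s //=; first by rewrite IHa IHb.
rewrite IHa; congr Lam; apply: inst_ext => -[|i] //=.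
by rewrite !ren_ren; apply: ren_ext.
Qed.

Lemma inst_inst s s' t : inst s (inst s' t) = inst (inst s \o s') t.
Proof.
elim: t s s' => [n|a IHa b IHb|a IHa] s s' //=; first by rewrite IHa IHb.
rewrite IHa; congr Lam; apply: inst_ext => -[|i] //=.
by rewrite inst_ren ren_inst; apply: inst_ext.
Qed.

Lemma lift_ren c t : lift c t = ren (fun i => if c <= i then i.+1 else i) t.
Proof.
elim: t c => [n|a IHa b IHb|a IHa] c /=; first by case: ifP.
  by rewrite IHa IHb.
by rewrite IHa; congr Lam; apply: ren_ext => -[|i] //=; rewrite ltnS; case: ifP.
Qed.

Lemma lift0 t : lift 0 t = ren succn t.
Proof. by rewrite lift_ren; apply: ren_ext. Qed.

Lemma subst_inst j u t :
  subst j u t = inst (fun i => if i == j then u else Var (if j < i then i.-1 else i)) t.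
Proof.
elim: t j u => [n|a IHa b IHb|a IHa] j u /=; first by case: ifP => //; case: ifP.
  by rewrite IHa IHb.
rewrite IHa; congr Lam; apply: inst_ext => -[|i] //=.
by rewrite eqSS ltnS lift0; case: eqP => // _; case: ifP => //; case: i.
Qed.

Lemma subst0 u t : subst 0 u t = inst (scons u Var) t.
Proof. by rewrite subst_inst; apply: inst_ext => -[|[|i]]. Qed.

Definition Lams (n : nat) (t : tm) : tm := iter n Lam t.

Definition upn (n : nat) (s : nat -> tm) : nat -> tm := iter n up s.

Lemma inst_Lams s n t : inst s (Lams n t) = Lams n (inst (upn n s) t).
Proof. by elim: n s => //= n IH s; rewrite IH /upn -iterSr. Qed.

Lemma upn_lt n s i : i < n -> upn n s i = Var i.
Proof. by elim: n i => // n IH [|i] //= ?; rewrite IH. Qed.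

Lemma upn_addn n s i : upn n s (n + i) = ren (addn n) (s i).
Proof.
elim: n => /= [|n IH]; first by rewrite ren_id.
by rewrite /upn /= -/(upn n s) IH ren_ren; apply: ren_ext.
Qed.

Arguments upn : simpl never.

Lemma inst_apps s a ts : inst s (apps a ts) = apps (inst s a) (map (inst s) ts).
Proof. by elim: ts a => //= u ts IH a; rewrite IH. Qed.

Lemma ren_apps xi a ts : ren xi (apps a ts) = apps (ren xi a) (map (ren xi) ts).
Proof. by elim: ts a => //= u ts IH a; rewrite IH. Qed.

Lemma inst_iter s n a b :
  inst s (iter n (App a) b) = iter n (App (inst s a)) (inst s b).
Proof. by elim: n => //= n ->. Qed.

(* [msubst vs] is the substitution performed by [apps (Lams (size vs) t) vs]: the
   last argument replaces index 0. *)
Definition msubst (vs : seq tm) (i : nat) : tm :=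
  if i < size vs then nth (Var 0) vs ((size vs).-1 - i) else Var (i - size vs).

Fixpoint vars (k : nat) : seq tm := if k is k'.+1 then Var k' :: vars k' else [::].

Lemma size_vars k : size (vars k) = k.
Proof. by elim: k => //= k ->. Qed.

Lemma vars_rcons k : vars k.+1 = rcons (map (ren succn) (vars k)) (Var 0).
Proof. by elim: k => //= k ->. Qed.

Lemma nth_vars k j : j < k -> nth (Var 0) (vars k) j = Var (k.-1 - j).
Proof. by elim: k j => // k IH [|j] /= ?; [rewrite subn0 | rewrite IH //; congr Var; lia]. Qed.

Lemma map_inst_vars s k : (forall i, i < k -> s i = Var i) -> map (inst s) (vars k) = vars k.
Proof. by elim: k => //= k IH E; rewrite E // IH // => i ?; apply: E; apply: ltnW. Qed.

Lemma map_msubst_vars vs : map (inst (msubst vs)) (vars (size vs)) = vs.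
Proof.
apply: (@eq_from_nth _ (Var 0)); rewrite size_map size_vars // => j lt_j.
rewrite (nth_map (Var 0)) ?size_vars // nth_vars //= /msubst ifT; last by lia.
by congr nth; lia.
Qed.

Lemma lookup_size G n A : lookup G n = Some A -> n < size G.
Proof. by elim: G n => [|B G IH] [|n] //= /IH. Qed.

Lemma lookup_cat G G' n : n < size G -> lookup (G ++ G') n = lookup G n.
Proof. by elim: G n => [|B G IH] [|n] //= /IH. Qed.

Lemma lookup_nseq A n G i : i < n -> lookup (nseq n A ++ G) i = Some A.
Proof. by elim: n i => // n IH [|i] //= /IH. Qed.

Lemma lookup_nseq_addn A n G i : lookup (nseq n A ++ G) (n + i) = lookup G i.
Proof. by elim: n. Qed.

Lemma inst_typed_id G t A s :
  typed G t A -> (forall i, i < size G -> s i = Var i) -> inst s t = t.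
Proof.
move=> tA; elim: tA s => {G t A} /= [G n A /lookup_size n_lt|G a b A B _ IHa _ IHb|G a A B _ IH] s E.
- exact: E.
- by rewrite IHa // IHb.
- by rewrite IH // => -[|i] //= /E ->.
Qed.

Lemma inst_closed t A s : typed [::] t A -> inst s t = t.
Proof. by move=> tA; apply: inst_typed_id tA _. Qed.

Lemma ren_closed t A xi : typed [::] t A -> ren xi t = t.
Proof. by rewrite renE; apply: inst_closed. Qed.

Lemma typed_weaken G G' t A : typed G t A -> typed (G ++ G') t A.
Proof.
elim=> {G t A} [G n A E|G a b A B _ Ha _ Hb|G a A B _ Ha].
- by apply: typed_var; rewrite lookup_cat // (lookup_size E).
- exact: typed_app Ha Hb.
- exact: typed_lam.
Qed.

Lemma typed_nil G t A : typed [::] t A -> typed G t A.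
Proof. exact: typed_weaken. Qed.

Lemma typed_Lams n A B G t :
  typed (nseq n A ++ G) t B -> typed G (Lams n t) (arrows n A B).
Proof.
elim: n G => //= n IH G tB; apply/typed_lam/IH.
suff -> : nseq n A ++ A :: G = A :: nseq n A ++ G by [].
by elim: n {IH tB} => //= n ->.
Qed.

Lemma typed_apps G t n A B ts :
  typed G t (arrows n A B) -> size ts = n ->
  (forall u, List.In u ts -> typed G u A) -> typed G (apps t ts) B.
Proof.
elim: ts t n => [|u ts IH] t [|n] //= tt [size_ts] tts.
apply: (IH _ n) => // [|w w_ts]; last by apply: tts; right.
by apply: typed_app tt _; apply: tts; left.
Qed.

Lemma typed_vars k A G u : List.In u (vars k) -> typed (nseq k A ++ G) u A.
Proof.
move=> u_k; suff [j j_lt ->] : exists2 j, j < k & u = Var j.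
  by apply/typed_var/lookup_nseq.
elim: k u_k => //= k IH [<-|/IH [j j_lt ->]]; first by exists k.
by exists j => //; apply: ltnW.
Qed.

Lemma typed_church G A n : typed G (church n) (omega A).
Proof.
do 2 apply: typed_lam; elim: n => /= [|n IH]; first exact: typed_var.
by apply: typed_app IH; apply: typed_var.
Qed.

Lemma inst_church s n : inst s (church n) = church n.
Proof. exact: (inst_closed _ (typed_church _ TO n)). Qed.

Lemma ren_church xi n : ren xi (church n) = church n.
Proof. exact: (ren_closed _ (typed_church _ TO n)). Qed.

(** * Reduction and conversion *)

Definition red : tm -> tm -> Prop := clos_refl_trans tm step.

Lemma red_refl a : red a a.
Proof. exact: rt_refl. Qed.

Lemma red_trans a b c : red a b -> red b c -> red a c.
Proof. exact: rt_trans. Qed.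

Lemma red_app a a' b b' : red a a' -> red b b' -> red (App a b) (App a' b').
Proof.
move=> aa' bb'; apply: (@red_trans _ (App a' b)).
  by elim: aa' => *; [apply/rt_step/step_appl | apply: red_refl | apply: red_trans; eauto].
by elim: bb' => *; [apply/rt_step/step_appr | apply: red_refl | apply: red_trans; eauto].
Qed.

Lemma red_lam a a' : red a a' -> red (Lam a) (Lam a').
Proof. by elim=> *; [apply/rt_step/step_lam | apply: red_refl | apply: red_trans; eauto]. Qed.

Lemma red_Lams n a a' : red a a' -> red (Lams n a) (Lams n a').
Proof. by elim: n => //= n IH /IH /red_lam. Qed.

Lemma red_apps a a' ts : red a a' -> red (apps a ts) (apps a' ts).
Proof. by elim: ts a a' => //= u ts IH a a' aa'; apply/IH/red_app/red_refl. Qed.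

Lemma red_beta_eta_eq a b : red a b -> beta_eta_eq a b.
Proof. by elim=> *; [apply: rst_step | apply: rst_refl | apply: rst_trans; eauto]. Qed.

Lemma beta_eta_eq_app a a' b b' :
  beta_eta_eq a a' -> beta_eta_eq b b' -> beta_eta_eq (App a b) (App a' b').
Proof.
move=> aa' bb'; apply: (@rst_trans _ _ _ (App a' b)).
  elim: aa' => *; by [apply/rst_step/step_appl | apply: rst_refl
                     | apply: rst_sym | apply: rst_trans; eauto].
elim: bb' => *; by [apply/rst_step/step_appr | apply: rst_refl
                   | apply: rst_sym | apply: rst_trans; eauto].
Qed.

Lemma beta_eta_eq_apps (I : Type) a a' (s : seq I) (F F' : I -> tm) :
  beta_eta_eq a a' -> (forall i, beta_eta_eq (F i) (F' i)) ->
  beta_eta_eq (apps a [seq F i | i <- s]) (apps a' [seq F' i | i <- s]).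
Proof. by elim: s a a' => //= i s IH a a' aa' FF'; apply/IH/FF'/beta_eta_eq_app. Qed.

Lemma red_beta t u : red (App (Lam t) u) (inst (scons u Var) t).
Proof. by rewrite -subst0; apply/rt_step/step_beta. Qed.

Lemma red_beta_Lams n vs t : size vs = n -> red (apps (Lams n t) vs) (inst (msubst vs) t).
Proof.
move<-; elim: vs t => [|v vs IH] t /=.
  by rewrite inst_id; [apply: red_refl | move=> i; rewrite /msubst subn0].
apply: red_trans (red_apps _ (red_beta _ _)) _; rewrite inst_Lams.
apply: red_trans (IH _) _; rewrite inst_inst.
suff -> : inst (inst (msubst vs) \o upn (size vs) (scons v Var)) t = inst (msubst (v :: vs)) t.
  exact: red_refl.
apply: inst_ext => i /=; case: (ltnP i (size vs)) => i_vs.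
  rewrite upn_lt //= /msubst /= i_vs ltnS ltnW //.
  by rewrite (_ : (size vs) - i = ((size vs).-1 - i).+1) //; lia.
have [j ->] : exists j, i = size vs + j by exists (i - size vs); lia.
rewrite upn_addn inst_ren inst_id => [|m /=]; last first.
  by rewrite /msubst ltnNge leq_addr /=; congr Var; lia.
rewrite /msubst /=; case: j => [|j] /=.
  by rewrite addn0 ltnSn subnn.
by rewrite ltnNge (_ : size vs < size vs + j.+1) //=; [congr Var | ]; lia.
Qed.

Lemma red_eta_Lams k t : red (Lams k (apps (ren (addn k) t) (vars k))) t.
Proof.
elim: k t => [|k IH] t; first by rewrite /= ren_id //; apply: red_refl.
rewrite /Lams iterSr -/(Lams k _) vars_rcons /apps foldl_rcons -/(apps _ _).
have -> : apps (ren (addn k.+1) t) (map (ren succn) (vars k))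
          = lift 0 (apps (ren (addn k) t) (vars k)).
  by rewrite lift0 ren_apps ren_ren; congr apps; apply: ren_ext.
apply: red_trans (IH t); exact/red_Lams/rt_step/step_eta.
Qed.

Lemma red_church_app n f x : red (apps (church n) [:: f; x]) (iter n (App f) x).
Proof.
apply: red_trans (red_app (red_beta _ _) (red_refl _)) _.
rewrite /= inst_iter; apply: red_trans (red_beta _ _) _.
by rewrite inst_iter /= inst_ren inst_id //; apply: red_refl.
Qed.

Lemma red_iter_mul F f a b y :
  (forall z, red (App F z) (iter b (App f) z)) ->
  red (iter a (App F) y) (iter (a * b) (App f) y).
Proof.
move=> Ff; elim: a => /= [|a IH]; first exact: red_refl.
by rewrite mulSn iterD; apply: red_trans (red_app (red_refl _) IH) (Ff _).
Qed.

(** * Definability at a fixed type *)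

Definition church_args k (x : 'I_k -> nat) : seq tm := [seq church (x i) | i <- enum 'I_k].

Definition definable_at (A : ty) k (f : ('I_k -> nat) -> nat) : Prop :=
  exists E, typed [::] E (arrows k (omega A) (omega A)) /\
    forall x, beta_eta_eq (apps E (church_args x)) (church (f x)).

Lemma definable_at_ext A k (f g : ('I_k -> nat) -> nat) :
  f =1 g -> definable_at A f -> definable_at A g.
Proof. by move=> fg [E [tE Ef]]; exists E; split => // x; rewrite -fg. Qed.

Lemma size_church_args k x : size (@church_args k x) = k.
Proof. by rewrite size_map size_enum_ord. Qed.

Lemma msubst_church_args k x (i : 'I_k) : msubst (church_args x) (k.-1 - i) = church (x i).
Proof.
have lt_i := ltn_ord i; rewrite /msubst size_church_args ifT; last by lia.
by rewrite (nth_map i) ?size_enum_ord (_ : k.-1 - (k.-1 - i) = i) ?nth_ord_enum //; lia.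
Qed.

Lemma upn_msubst_church_args k p (x : 'I_k.+1 -> nat) j i : j <= k -> i = p + (k - j) ->
  upn p (msubst (church_args x)) i = church (x (inord j)).
Proof.
move=> le_j ->; have := msubst_church_args x (inord j).
by rewrite inordK // upn_addn => ->; rewrite ren_church.
Qed.

Lemma red_Lams_church_args k p t (x : 'I_k -> nat) :
  red (apps (Lams k (Lams p t)) (church_args x))
      (Lams p (inst (upn p (msubst (church_args x))) t)).
Proof. by rewrite -inst_Lams; apply/red_beta_Lams/size_church_args. Qed.

Lemma definable_const A k c : definable_at A (fun _ : 'I_k -> nat => c).
Proof.
exists (Lams k (church c)); split; first exact/typed_Lams/typed_church.
move=> x; apply/red_beta_eta_eq; rewrite -{2}(inst_church (msubst (church_args x)) c).
exact: red_beta_Lams (size_church_args x).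
Qed.

Lemma definable_proj A k (i : 'I_k) : definable_at A (fun x : 'I_k -> nat => x i).
Proof.
exists (Lams k (Var (k.-1 - i))); split.
  by apply/typed_Lams/typed_var; rewrite lookup_nseq //; move: (ltn_ord i); lia.
move=> x; rewrite -(msubst_church_args x).
exact/red_beta_eta_eq/(red_beta_Lams _ (size_church_args x)).
Qed.

Lemma definable_add A : definable_at A (fun x : 'I_2 -> nat => x (inord 0) + x (inord 1)).
Proof.
(* fun m n f x => m f (n f x) *)
exists (Lams 2 (Lams 2 (apps (Var 3) [:: Var 1; apps (Var 2) [:: Var 1; Var 0]]))).
split; first by apply: typed_Lams; repeat econstructor.
move=> x; apply/red_beta_eta_eq; apply: red_trans (red_Lams_church_args 2 _ x) _.
rewrite /= [upn _ _ 0]upn_lt // [upn _ _ 1]upn_lt //.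
rewrite (upn_msubst_church_args _ _ (j := 0) (i := 3)) //.
rewrite (upn_msubst_church_args _ _ (j := 1) (i := 2)) //.
apply: (@red_Lams 2); apply: red_trans (red_app (red_refl _) (red_church_app _ _ _)) _.
by rewrite iterD; apply: red_church_app.
Qed.

Lemma definable_mul A : definable_at A (fun x : 'I_2 -> nat => x (inord 0) * x (inord 1)).
Proof.
(* fun m n f x => m (n f) x *)
exists (Lams 2 (Lams 2 (apps (Var 3) [:: App (Var 2) (Var 1); Var 0]))).
split; first by apply: typed_Lams; repeat econstructor.
move=> x; apply/red_beta_eta_eq; apply: red_trans (red_Lams_church_args 2 _ x) _.
rewrite /= [upn _ _ 0]upn_lt // [upn _ _ 1]upn_lt //.
rewrite (upn_msubst_church_args _ _ (j := 0) (i := 3)) //.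
rewrite (upn_msubst_church_args _ _ (j := 1) (i := 2)) //.
apply: (@red_Lams 2); apply: red_trans (red_church_app _ _ _) _.
exact/red_iter_mul/red_church_app.
Qed.

Lemma definable_ifzero A : definable_at A (fun x : 'I_3 -> nat =>
  if x (inord 0) == 0 then x (inord 1) else x (inord 2)).
Proof.
(* fun m n p f x => m (fun _ => p f x) (n f x) *)
exists (Lams 3 (Lams 2 (apps (Var 4)
  [:: Lam (apps (Var 3) [:: Var 2; Var 1]); apps (Var 3) [:: Var 1; Var 0]]))).
split; first by apply: typed_Lams; repeat econstructor.
move=> x; apply/red_beta_eta_eq; apply: red_trans (red_Lams_church_args 2 _ x) _.
rewrite /= [upn _ _ 0]upn_lt // [upn _ _ 1]upn_lt //.
rewrite (upn_msubst_church_args _ _ (j := 0) (i := 4)) //.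
rewrite (upn_msubst_church_args _ _ (j := 1) (i := 3)) //.
rewrite (upn_msubst_church_args _ _ (j := 2) (i := 2)) // ren_church.
apply: (@red_Lams 2); apply: red_trans (red_church_app _ _ _) _.
case: (x (inord 0)) => [|n] /=; first exact: red_church_app.
apply: red_trans (red_beta _ _) _.
by cbn -[church]; rewrite inst_church; apply: red_church_app.
Qed.

Lemma definable_compose A m k (h : ('I_m -> nat) -> nat) (gs : 'I_m -> ('I_k -> nat) -> nat) :
  definable_at A h -> (forall i, definable_at A (gs i)) -> definable_at A (compose h gs).
Proof.
move=> [H [tH Hh]] /fin_all_exists [Gs GsP].
have tGs i := proj1 (GsP i).
exists (Lams k (apps H [seq apps (Gs i) (vars k) | i <- enum 'I_m])); split.
  apply/typed_Lams/typed_apps; [exact: typed_nil tH | by rewrite size_map size_enum_ord |].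
  move=> _ /List.in_map_iff [i [<- _]].
  apply: typed_apps; [exact: typed_nil (tGs i) | exact: size_vars | exact: typed_vars].
move=> x; apply: rst_trans (red_beta_eta_eq (red_beta_Lams _ (size_church_args x))) _.
rewrite inst_apps (inst_closed _ tH) -map_comp.
have E i : inst (msubst (church_args x)) (apps (Gs i) (vars k)) = apps (Gs i) (church_args x).
  rewrite inst_apps (inst_closed _ (tGs i)).
  by have := map_msubst_vars (church_args x); rewrite size_church_args => ->.
rewrite (eq_map E); apply: rst_trans (Hh (fun i => gs i x)).
by apply: beta_eta_eq_apps => [|i]; [apply: rst_refl | case: (GsP i)].
Qed.

Lemma ext_poly_definable A k (f : ('I_k -> nat) -> nat) : ext_poly f -> definable_at A f.
Proof.
elim=> {k f} *; by [ apply: definable_const | apply: definable_proj | apply: definable_add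
  | apply: definable_mul | apply: definable_ifzero | apply: definable_compose ].
Qed.

(** * Selection by a finite-state iteration *)

Section Selection.

Variables (L : nat) (h : nat -> nat).
Hypothesis L_gt0 : 0 < L.

Definition sel_ty : ty := arrows L TO TO.

Definition proj_tm (i : nat) : tm := Lams L (Var (L.-1 - i)).

Definition next_tm : tm :=
  Lam (Lams L (apps (Var L) [seq Var (L.-1 - h j) | j <- iota 0 L])).

Lemma typed_proj_tm G i : typed G (proj_tm i) sel_ty.
Proof. by apply/typed_Lams/typed_var; rewrite lookup_nseq //; lia. Qed.

Lemma typed_next_tm G : typed G next_tm (Arr sel_ty sel_ty).
Proof.
apply/typed_nil/typed_lam/typed_Lams; apply: (typed_apps (n := L) (A := TO)).
- by apply: typed_var; rewrite -[L in lookup _ L]addn0 lookup_nseq_addn.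
- by rewrite size_map size_iota.
move=> _ /List.in_map_iff [j [<- _]]; apply: typed_var; rewrite lookup_nseq //; lia.
Qed.

Lemma red_proj_tm_apps i cands : size cands = L -> i < L ->
  red (apps (proj_tm i) cands) (nth (Var 0) cands i).
Proof.
move=> size_cands lt_i; apply: red_trans (red_beta_Lams _ size_cands) _.
rewrite /= /msubst size_cands ifT; last by lia.
by rewrite (_ : L.-1 - (L.-1 - i) = i); [apply: red_refl | lia].
Qed.

Lemma red_next_tm i : i < L -> red (App next_tm (proj_tm i)) (proj_tm (h i)).
Proof.
move=> lt_i; apply: red_trans (red_beta _ _) _.
rewrite inst_Lams inst_apps -map_comp /= -[X in upn _ _ X]addn0 upn_addn.
rewrite (ren_closed _ (typed_proj_tm _ i)) (eq_map (g := fun j => Var (L.-1 - h j))).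
  apply: red_Lams; apply: red_trans (red_proj_tm_apps _ lt_i) _; first by rewrite size_map size_iota.
  by rewrite (nth_map 0) ?size_iota // nth_iota //; apply: red_refl.
by move=> j /=; rewrite upn_lt //; lia.
Qed.

Hypothesis h_lt : forall j, j < L -> h j < L.

Lemma iter_lt m : iter m h 0 < L.
Proof. by elim: m => //= m IH; apply: h_lt. Qed.

Lemma red_iter_next_tm m :
  red (iter m (App next_tm) (proj_tm 0)) (proj_tm (iter m h 0)).
Proof.
elim: m => [|m IH] /=; first exact: red_refl.
exact: red_trans (red_app (red_refl _) IH) (red_next_tm (iter_lt m)).
Qed.

Variables (r : nat) (c : nat -> nat).
Hypothesis c_lt : forall j, j < L -> c j < r.

(* fun x_0 .. x_r f y z_1 .. z_L =>
     x_0 next_tm (proj_tm 0) (x_(c 0 + 1) f y z_1 .. z_L) .. (x_(c (L-1) + 1) f y z_1 .. z_L) *)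
Definition select_tm : tm :=
  Lams r.+1 (Lams L.+2 (apps (apps (Var (L.+2 + r)) [:: next_tm; proj_tm 0])
    [seq apps (Var (L.+2 + (r.-1 - c j))) (vars L.+2) | j <- iota 0 L])).

Lemma typed_select_tm :
  typed [::] select_tm (arrows r.+1 (omega sel_ty) (omega sel_ty)).
Proof.
apply: typed_Lams; do 2 apply: typed_lam; apply: typed_Lams.
set G := _ ++ _.
have tx i : i <= r -> typed G (Var (L.+2 + i)) (omega sel_ty).
  move=> le_i; apply: typed_var; rewrite /G 2!addSnnS lookup_nseq_addn.
  exact: (@lookup_nseq _ r.+1 [::] i le_i).
apply: (typed_apps (n := L) (A := TO)).
- rewrite /=; apply: typed_app (typed_proj_tm _ 0).
  by apply: typed_app (typed_next_tm _); apply: tx.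
- by rewrite size_map size_iota.
move=> _ /List.in_map_iff [j [<- _]]; rewrite [apps _ _]/=.
apply: (typed_apps (n := L) (A := TO)); [|exact: size_vars|exact: typed_vars].
apply: typed_app; first apply: typed_app.
- exact/tx/(leq_trans (leq_subr _ _) (leq_pred r)).
- by apply: typed_var; rewrite -addn1 lookup_nseq_addn.
- by apply: typed_var; rewrite -[X in lookup _ X]addn0 lookup_nseq_addn.
Qed.

Lemma red_select_tm (x : 'I_r.+1 -> nat) :
  red (apps select_tm (church_args x)) (church (x (inord (c (iter (x (inord 0)) h 0)).+1))).
Proof.
apply: red_trans (red_Lams_church_args _ _ x) _.
set σ := upn L.+2 _; rewrite !inst_apps [inst _ (Var _)]/=.
have -> : map (inst σ) [:: next_tm; proj_tm 0] = [:: next_tm; proj_tm 0].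
  by rewrite !map_cons (inst_closed _ (typed_next_tm _)) (inst_closed _ (typed_proj_tm _ 0)).
rewrite /σ (upn_msubst_church_args _ _ (j := 0)) ?subn0 //.
apply: red_trans (red_Lams _ (red_apps _ (red_church_app _ _ _))) _.
apply: red_trans (red_Lams _ (red_apps _ (red_iter_next_tm _))) _.
apply: red_trans (red_Lams _ (red_proj_tm_apps _ (iter_lt _))) _; first by rewrite !size_map size_iota.
have lt_i := iter_lt (x (inord 0)); have lt_c := c_lt lt_i.
move: (iter _ h 0) lt_i lt_c => i lt_i lt_c.
rewrite (nth_map (Var 0)) ?size_map ?size_iota // (nth_map 0) ?size_iota // nth_iota //.
rewrite inst_apps map_inst_vars => [|j]; last exact: upn_lt.
rewrite [inst _ _]/= (upn_msubst_church_args _ _ (j := (c i).+1)) //; last by rewrite add0n; lia.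
by rewrite -{1}(ren_church (addn L.+2)); apply: red_eta_Lams.
Qed.

Lemma definable_select :
  definable_at sel_ty (fun x : 'I_r.+1 -> nat => x (inord (c (iter (x (inord 0)) h 0)).+1)).
Proof.
exists select_tm; split; first exact: typed_select_tm.
by move=> x; apply/red_beta_eta_eq/red_select_tm.
Qed.

End Selection.

Lemma definable_f1 l L : 0 < L -> l %| L -> definable_at (sel_ty L) (f1 l).
Proof.
move=> L_gt0 l_L; have l_gt0 := dvdn_gt0 L_gt0 l_L.
have h_lt j : j < L -> j.+1 %% L < L by move=> _; apply: ltn_pmod.
have c_lt j : j < L -> j %% l < l by move=> _; apply: ltn_pmod.
apply: definable_at_ext (definable_select L_gt0 h_lt c_lt) => x.
have -> m : iter m (fun j => j.+1 %% L) 0 = m %% L.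
  by elim: m => [|m /= ->]; rewrite ?mod0n // -addn1 modnDml addn1.
by rewrite /f1 modn_dvdm.
Qed.

Lemma definable_f2 l L : l.+2 <= L -> definable_at (sel_ty L) (f2 l).
Proof.
move=> lt_l_L; have L_gt0 : 0 < L by apply: leq_trans lt_l_L.
have h_lt j : j < L -> minn j.+1 L.-1 < L by move=> _; lia.
have c_lt j : j < L -> (if j <= l then 0 else 1) < 2 by move=> _; case: ifP.
apply: definable_at_ext (definable_select L_gt0 h_lt c_lt) => x.
have -> m : iter m (fun j => minn j.+1 L.-1) 0 = minn m L.-1.
  by elim: m => [|m /= ->]; [rewrite min0n | lia].
by rewrite /f2; case: ifP; case: ifP => //; lia.
Qed.

(** * Functions of the class G *)

Definition definable_at_multiples k (f : ('I_k -> nat) -> nat) : Prop :=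
  exists2 N, 0 < N & forall L, 0 < L -> N %| L -> definable_at (sel_ty L) f.

Lemma inG_definable_at_multiples k (f : ('I_k -> nat) -> nat) :
  inG f -> definable_at_multiples f.
Proof.
elim=> {k f} [k f /ext_poly_definable f_def|l l_ge2|l _|m k h gs _ [N N_gt0 h_def] _ gs_def].
- by exists 1 => // L _ _; apply: f_def.
- by exists l; [apply: leq_trans l_ge2 | move=> L; apply: definable_f1].
- by exists l.+2 => // L L_gt0 /(dvdn_leq L_gt0); apply: definable_f2.
have [Ns Ns_gt0 gs_def'] := fin_all_exists2 (U := fun _ => nat) gs_def.
exists (N * \prod_(i < m) Ns i) => [|L L_gt0 NNs_L]; first by rewrite muln_gt0 N_gt0 prodn_gt0.
apply: definable_compose => [|i].
  by apply: h_def => //; apply: dvdn_trans NNs_L; apply: dvdn_mulr.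
apply: gs_def' => //; apply: dvdn_trans NNs_L; apply: dvdn_mull.
by rewrite (bigD1 i) //= dvdn_mulr.
Qed.

Theorem corollary1 (k : nat) (f : ('I_k -> nat) -> nat) :
  inG f -> strictly_definable f.
Proof.
move=> /inG_definable_at_multiples [N N_gt0 defN].
by have [E E_def] := defN N N_gt0 (dvdnn N); exists (sel_ty N), E.
Qed.
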